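(* Let $1\le k\le m$ and let $\phi_{m,k}$ be the automorphism of the free group $F_{m+k}=F(A_1,\dots,A_m,B_1,\dots,B_k)$ described below. Then $\operatorname{gr}_{\phi_{m,k}}(n)\succeq n^k$ and $\operatorname{gr}_{(\phi_{m,k})^{-1}}(n)\succeq n^k$.
   Context: $\phi_{m,k}(A_i)=A_1\cdots A_{i-1}A_iA_{i-1}^{-1}\cdots A_1^{-1}$ for $1\le i\le m$, and $\phi_{m,k}(B_j)=A_1\cdots A_m(B_1\cdots B_j)A_{j-1}^{-1}\cdots A_1^{-1}$ for $1\le j\le k$. $\operatorname{gr}_\psi(n)=\max_{x}\|\psi^n(x)\|$ over the free basis, $\|\cdot\|$ being word length. $f\succeq g$ means $g(n)\le Af(n)+B$ for some $A>0,B\ge0$ and all $n$. *)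

From mathcomp Require Import all_boot.
Set Implicit Arguments. Unset Strict Implicit. Unset Printing Implicit Defensive.

(* Free group F_N on generators x_0,...,x_{N-1}.  A letter (i,true) is x_i,
   (i,false) is x_i^{-1}.  Elements are represented by freely reduced words. *)
Definition letter := (nat * bool)%type.
Definition word := seq letter.

Definition linv (l : letter) : letter := (l.1, ~~ l.2).
Definition winv (w : word) : word := rev (map linv w).

Definition reduce (w : word) : word :=
  foldr (fun l acc => match acc with
                      | l' :: acc' => if l' == linv l then acc' else l :: acc
                      | [::] => [:: l] end) [::] w.

Definition subst (f : nat -> word) (w : word) : word :=
  reduce (flatten (map (fun l => if l.2 then f l.1 else winv (f l.1)) w)).

Definition iter_len (f : nat -> word) (n i : nat) : nat :=
  size (iter n (subst f) [:: (i, true)]).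

Definition gr (N : nat) (f : nat -> word) (n : nat) : nat :=
  \max_(i < N) iter_len f n i.

Definition dominates (F G : nat -> nat) : Prop :=
  exists A B : nat, 0 < A /\ forall n, G n <= A * F n + B.

(* phi_{m,k} on F(A_1..A_m,B_1..B_k): A_{a+1} is generator a (a < m),
   B_{b+1} is generator m+b (b < k).  Other indices are fixed (irrelevant). *)
Definition phi (m k : nat) (i : nat) : word :=
  if i < m then
    [seq (t, true) | t <- iota 0 i] ++ [:: (i, true)]
      ++ [seq (t, false) | t <- rev (iota 0 i)]
  else if i < m + k then
    let b := i - m in
    [seq (t, true) | t <- iota 0 m] ++ [seq (m + t, true) | t <- iota 0 b.+1]
      ++ [seq (t, false) | t <- rev (iota 0 b)]
  else [:: (i, true)].

Definition is_inverse (N : nat) (f g : nat -> word) : Prop :=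
  (forall i, i < N -> all (fun l : letter => l.1 < N) (g i)) /\
  (forall i, i < N -> subst g (f i) = [:: (i, true)]) /\
  (forall i, i < N -> subst f (g i) = [:: (i, true)]).

From Stdlib Require Import Setoid Morphisms.
From mathcomp Require Import all_boot all_order all_algebra zify ring.

(* Both bounds come from abelianisation: a word is at least as long as the
   absolute exponent sum of any generator in it.  Write x_0, ..., x_(m+k-1) for
   A_1, ..., A_m, B_1, ..., B_k and P_j = x_0 ... x_(j-1).  Then
   phi(x_t) = P_(t+1) P_(t')^-1 with t' < m, so on the exponent sums c_s of the
   generators x_s with s >= m-1, phi acts by c_s |-> sum_(t >= s) c_t and its
   inverse by c_s |-> c_s - c_(s+1).  Starting from B_k, after n steps the
   exponent sum of x_(m+k-1-i) is at least C(n, i) under phi and exactly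
   (-1)^i C(n, i) under the inverse; i = k gives C(n, k), which dominates n^k.
   The inverse is explicit: as x_t = P_t^-1 P_(t+1), it sends x_t to
   rho_t^-1 rho_(t+1), where rho_j is a phi-preimage of P_j. *)

Definition step (l : letter) (acc : word) : word :=
  match acc with
  | l' :: acc' => if l' == linv l then acc' else l :: acc
  | [::] => [:: l]
  end.

Lemma reduceE w : reduce w = foldr step [::] w.
Proof. by []. Qed.

Fixpoint reduced (w : word) : bool :=
  if w is a :: ((b :: _) as t) then (b != linv a) && reduced t else true.

Lemma linvK : involutive linv.
Proof. by case=> a b; rewrite /linv /= negbK. Qed.

Lemma reduced_behead l w : reduced (l :: w) -> reduced w.
Proof. by case: w => // l' w /andP[]. Qed.

Lemma reduced_step l acc : reduced acc -> reduced (step l acc).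
Proof.
case: acc => [|l' acc] //= red_acc.
by case: ifP => [_|/= ->]; [exact: reduced_behead red_acc | rewrite red_acc].
Qed.

Lemma reduced_foldr acc u : reduced acc -> reduced (foldr step acc u).
Proof. by move=> red_acc; elim: u => //= l u; apply: reduced_step. Qed.

Lemma reduce_reduced w : reduced (reduce w).
Proof. exact: reduced_foldr. Qed.

Lemma step_linvK l acc : reduced acc -> step l (step (linv l) acc) = acc.
Proof.
case: acc => [|l' acc] /=; first by case: eqP.
rewrite linvK; case: (eqVneq l' l) => [->|neq] red_acc; last by rewrite /= eqxx.
by case: acc red_acc => [|l'' acc] //= /andP[/negbTE->].
Qed.

Lemma foldr_step acc l r : reduced acc ->
  foldr step acc (step l r) = step l (foldr step acc r).
Proof.
move=> red_acc; case: r => [|l' r] //=.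
case: (eqVneq l' (linv l)) => [->|_] //=.
by rewrite step_linvK //; apply: reduced_foldr.
Qed.

Lemma foldr_reduce acc u : reduced acc ->
  foldr step acc (reduce u) = foldr step acc u.
Proof. by move=> red_acc; elim: u => //= l u IHu; rewrite foldr_step // IHu. Qed.

Lemma reduce_id w : reduced w -> reduce w = w.
Proof.
elim: w => //= l w IHw red_lw; rewrite IHw; last exact: reduced_behead red_lw.
by case: w red_lw {IHw} => //= l' w /andP[/negbTE->].
Qed.

Lemma reduceK w : reduce (reduce w) = reduce w.
Proof. exact/reduce_id/reduce_reduced. Qed.

Lemma reduce_cat u v : reduce (u ++ v) = foldr step (reduce v) u.
Proof. by rewrite !reduceE foldr_cat. Qed.

Lemma reduce_catl u v : reduce (reduce u ++ v) = reduce (u ++ v).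
Proof. by rewrite !reduce_cat foldr_reduce // reduce_reduced. Qed.

Lemma reduce_catr u v : reduce (u ++ reduce v) = reduce (u ++ v).
Proof. by rewrite !reduce_cat reduceK. Qed.

Lemma winv_cat u v : winv (u ++ v) = winv v ++ winv u.
Proof. by rewrite /winv map_cat rev_cat. Qed.

Lemma winvK : involutive winv.
Proof.
by move=> w; rewrite /winv map_rev revK -map_comp map_id_in // => l _; exact: linvK.
Qed.

Lemma winv_cons l w : winv (l :: w) = winv w ++ [:: linv l].
Proof. by rewrite -cat1s winv_cat. Qed.

Lemma reduce_cancel w v : reduce (w ++ winv w ++ v) = reduce v.
Proof.
elim: w v => // l w IHw v.
rewrite winv_cons -catA cat_cons.
change (step l (reduce (w ++ winv w ++ linv l :: v)) = reduce v).
by rewrite IHw /= step_linvK // reduce_reduced.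
Qed.

Definition free_eq (u v : word) : Prop := reduce u = reduce v.
Infix "=F" := free_eq (at level 70).

#[export] Instance free_eq_equiv : Equivalence free_eq.
Proof. by split; rewrite /free_eq; [move=> u | move=> u v -> | move=> u v w ->]. Qed.

#[export] Instance cat_free_eq : Proper (free_eq ==> free_eq ==> free_eq) (@cat letter).
Proof.
move=> u u' eq_u v v' eq_v.
by rewrite /free_eq -reduce_catl eq_u reduce_catl -reduce_catr eq_v reduce_catr.
Qed.

Lemma cancel_free_eq w v : w ++ winv w ++ v =F v.
Proof. exact: reduce_cancel. Qed.

Lemma cancel_free_eq' w v : winv w ++ w ++ v =F v.
Proof. by rewrite -{2}(winvK w); apply: cancel_free_eq. Qed.

Lemma cancel_free_eq0 w : w ++ winv w =F [::].
Proof. by rewrite -[_ ++ winv w]cats0 -catA cancel_free_eq. Qed.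

Lemma cancel_free_eq0' w : winv w ++ w =F [::].
Proof. by rewrite -[_ ++ w]cats0 -catA cancel_free_eq'. Qed.

#[export] Instance winv_free_eq : Proper (free_eq ==> free_eq) winv.
Proof.
move=> u v eq_uv.
transitivity (winv u ++ v ++ winv v); first by rewrite cancel_free_eq0 cats0.
by rewrite -{1}eq_uv cancel_free_eq'.
Qed.

Definition letter_img (f : nat -> word) (l : letter) : word :=
  if l.2 then f l.1 else winv (f l.1).

Definition expand (f : nat -> word) (w : word) : word :=
  flatten (map (letter_img f) w).

Lemma substE f w : subst f w = reduce (expand f w).
Proof. by []. Qed.

Lemma expand_cat f u v : expand f (u ++ v) = expand f u ++ expand f v.
Proof. by rewrite /expand map_cat flatten_cat. Qed.

Lemma expand_cons f t w : expand f ((t, true) :: w) = f t ++ expand f w.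
Proof. by []. Qed.

Lemma expand_gen f t : expand f [:: (t, true)] = f t.
Proof. by rewrite expand_cons cats0. Qed.

Lemma expand_winv f w : expand f (winv w) = winv (expand f w).
Proof.
elim: w => // l w IHw; rewrite winv_cons expand_cat IHw winv_cat; congr (_ ++ _).
by case: l => t [] /=; rewrite /expand /= !cats0 /letter_img /= ?winvK.
Qed.

Definition asc_word (j : nat) : word := [seq (t, true) | t <- iota 0 j].
Definition desc_word (j : nat) : word := rev (asc_word j).

Lemma asc_wordS j : asc_word j.+1 = asc_word j ++ [:: (j, true)].
Proof. by rewrite /asc_word -addn1 iotaD map_cat. Qed.

Lemma desc_wordS j : desc_word j.+1 = (j, true) :: desc_word j.
Proof. by rewrite /desc_word asc_wordS rev_cat. Qed.

Lemma winv_asc_word j : winv (asc_word j) = [seq (t, false) | t <- rev (iota 0 j)].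
Proof. by rewrite /winv map_rev -map_comp. Qed.

Definition tail_len (m t : nat) : nat := if t < m then t else t - m.

Lemma tail_len_le m t : tail_len m t <= t.
Proof. by rewrite /tail_len; case: (ltnP t m) => // _; apply: leq_subr. Qed.

Lemma tail_len_small m t : t < m -> tail_len m t = t.
Proof. by rewrite /tail_len => ->. Qed.

Lemma tail_len_lt {m k t} : k <= m -> t < m + k -> tail_len m t < m.
Proof. by move=> le_k_m lt_t; rewrite /tail_len; case: (ltnP t m) => // le_m_t; lia. Qed.

Lemma phiE m k t : t < m + k ->
  phi m k t = asc_word t.+1 ++ winv (asc_word (tail_len m t)).
Proof.
move=> lt_t; rewrite /phi /tail_len winv_asc_word asc_wordS -catA lt_t.
case: (ltnP t m) => // le_m_t.
rewrite !catA -asc_wordS; congr (_ ++ _).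
move: (t - m) (subnKC le_m_t) => b <-.
rewrite /asc_word -addnS iotaD map_cat add0n; congr (_ ++ _).
by rewrite -[in RHS](addn0 m) iotaDl -map_comp.
Qed.

Definition asc_preim (m j : nat) : word :=
  if j is t.+1 then (t, true) :: desc_word (tail_len m t) else [::].

Definition phi_inv (m t : nat) : word := winv (asc_preim m t) ++ asc_preim m t.+1.

Lemma asc_preimS m t : asc_preim m t.+1 = (t, true) :: desc_word (tail_len m t).
Proof. by []. Qed.

Lemma asc_preim_desc m j : j <= m -> asc_preim m j = desc_word j.
Proof. by case: j => // t lt_t; rewrite asc_preimS tail_len_small // desc_wordS. Qed.

Lemma expand_phi_desc m k j : j <= m -> expand (phi m k) (desc_word j) =F asc_word j.
Proof.
elim: j => // j IHj lt_j.
rewrite desc_wordS expand_cons phiE ?tail_len_small //; last exact: ltn_addr.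
by rewrite IHj ?(ltnW lt_j) // -catA cancel_free_eq0' cats0.
Qed.

Lemma expand_phi_asc_preim m k j : k <= m -> j <= m + k ->
  expand (phi m k) (asc_preim m j) =F asc_word j.
Proof.
case: j => // t le_k_m lt_t.
rewrite asc_preimS expand_cons phiE // expand_phi_desc.
  by rewrite -catA cancel_free_eq0' cats0.
exact: ltnW (tail_len_lt le_k_m lt_t).
Qed.

Lemma expand_phi_inv_asc m j : expand (phi_inv m) (asc_word j) =F asc_preim m j.
Proof.
elim: j => // j IHj.
by rewrite asc_wordS expand_cat expand_gen IHj cancel_free_eq.
Qed.

Lemma phi_inv_phi m k t : k <= m -> t < m + k ->
  subst (phi_inv m) (phi m k t) = [:: (t, true)].
Proof.
move=> le_k_m lt_t; suff: expand (phi_inv m) (phi m k t) =F [:: (t, true)] by [].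
rewrite phiE // expand_cat expand_winv !expand_phi_inv_asc asc_preimS.
rewrite asc_preim_desc; last exact: ltnW (tail_len_lt le_k_m lt_t).
by rewrite -cat1s -catA cancel_free_eq0 cats0.
Qed.

Lemma phi_phi_inv m k t : k <= m -> t < m + k ->
  subst (phi m k) (phi_inv m t) = [:: (t, true)].
Proof.
move=> le_k_m lt_t; suff: expand (phi m k) (phi_inv m t) =F [:: (t, true)] by [].
rewrite expand_cat expand_winv !expand_phi_asc_preim ?(ltnW lt_t) //.
by rewrite asc_wordS cancel_free_eq'.
Qed.

Definition on_gens (N : nat) (w : word) : bool := all (fun l : letter => l.1 < N) w.

Lemma on_gens_cat N u v : on_gens N (u ++ v) = on_gens N u && on_gens N v.
Proof. exact: all_cat. Qed.

Lemma on_gens_winv N w : on_gens N (winv w) = on_gens N w.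
Proof. by rewrite /on_gens /winv all_rev all_map. Qed.

Lemma on_gens_step N l acc : l.1 < N -> on_gens N acc -> on_gens N (step l acc).
Proof.
case: acc => [|l' acc] /= lt_l; first by rewrite lt_l.
by case: ifP => _ /=; [case/andP | move->; rewrite lt_l].
Qed.

Lemma on_gens_reduce N w : on_gens N w -> on_gens N (reduce w).
Proof. by elim: w => // l w IHw /andP[lt_l /IHw]; apply: on_gens_step. Qed.

Lemma on_gens_subst N f w : (forall t, t < N -> on_gens N (f t)) ->
  on_gens N w -> on_gens N (subst f w).
Proof.
move=> on_f on_w; apply: on_gens_reduce; elim: w on_w => //= l w IHw /andP[lt_l /IHw].
by rewrite /letter_img on_gens_cat; case: ifP => _; rewrite ?on_gens_winv on_f.
Qed.

Definition orbit (f : nat -> word) (n i : nat) : word := iter n (subst f) [:: (i, true)].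

Lemma on_gens_orbit N f n i : (forall t, t < N -> on_gens N (f t)) ->
  i < N -> on_gens N (orbit f n i).
Proof.
move=> on_f lt_i; elim: n => /= [|n]; first by rewrite /on_gens /= lt_i.
exact: on_gens_subst.
Qed.

Lemma on_gens_asc N j : j <= N -> on_gens N (asc_word j).
Proof.
by move=> le_j; rewrite /on_gens all_map; apply/allP => t; rewrite mem_iota /=; lia.
Qed.

Lemma on_gens_desc N j : j <= N -> on_gens N (desc_word j).
Proof. by move=> /on_gens_asc; rewrite /on_gens all_rev. Qed.

Lemma on_gens_phi m k t : t < m + k -> on_gens (m + k) (phi m k t).
Proof.
move=> lt_t; rewrite phiE // on_gens_cat on_gens_winv !on_gens_asc //.
exact: leq_trans (tail_len_le m t) (ltnW lt_t).
Qed.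

Lemma on_gens_asc_preim m N j : j <= N -> on_gens N (asc_preim m j).
Proof.
case: j => // t lt_t; rewrite asc_preimS; apply/andP; split=> //.
apply: on_gens_desc; exact: leq_trans (tail_len_le m t) (ltnW lt_t).
Qed.

Lemma on_gens_phi_inv m N t : t < N -> on_gens N (phi_inv m t).
Proof. by move=> lt_t; rewrite on_gens_cat on_gens_winv !on_gens_asc_preim // ltnW. Qed.

Section ExponentSum.
Import GRing.Theory Num.Theory.
Local Open Scope ring_scope.

Definition sgn (l : letter) : int := if l.2 then 1 else -1.

Definition expsum (g : nat -> int) (w : word) : int := \sum_(l <- w) sgn l * g l.1.

Definition delta (s t : nat) : int := (t == s)%:Z.

Lemma expsum_cat g u v : expsum g (u ++ v) = expsum g u + expsum g v.
Proof. by rewrite /expsum big_cat. Qed.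

Lemma expsum_cons g l w : expsum g (l :: w) = sgn l * g l.1 + expsum g w.
Proof. by rewrite /expsum big_cons. Qed.

Lemma expsum_gen g t : expsum g [:: (t, true)] = g t.
Proof. by rewrite expsum_cons /expsum big_nil mul1r addr0. Qed.

Lemma sgn_linv l : sgn (linv l) = - sgn l.
Proof. by case: l => t []. Qed.

Lemma expsum_winv g w : expsum g (winv w) = - expsum g w.
Proof.
rewrite /expsum /winv big_rev big_map -sumrN; apply: eq_bigr => l _.
by rewrite sgn_linv mulNr.
Qed.

Lemma expsum_rev g w : expsum g (rev w) = expsum g w.
Proof. by rewrite /expsum big_rev. Qed.

Lemma expsum_reduce g w : expsum g (reduce w) = expsum g w.
Proof.
elim: w => // l w IHw; rewrite expsum_cons -IHw.
change (expsum g (step l (reduce w)) = sgn l * g l.1 + expsum g (reduce w)).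
case: (reduce w) => [|l' acc] /=; first by rewrite !expsum_cons.
case: (eqVneq l' (linv l)) => [->|_]; rewrite !expsum_cons //.
by rewrite sgn_linv addrA mulNr addrN add0r.
Qed.

Lemma expsum_expand g f w :
  expsum g (expand f w) = expsum (fun t => expsum g (f t)) w.
Proof.
elim: w => [|l w IHw]; first by rewrite /expsum !big_nil.
have -> : expand f (l :: w) = letter_img f l ++ expand f w by [].
rewrite expsum_cat IHw expsum_cons.
by case: l => t [] /=; rewrite /letter_img /sgn /= ?expsum_winv (mul1r, mulN1r).
Qed.

Lemma expsum_subst_on {N f g h w} : on_gens N w ->
    (forall t, (t < N)%N -> expsum g (f t) = h t) ->
  expsum g (subst f w) = expsum h w.
Proof.
move=> /allP on_w fgh; rewrite substE expsum_reduce expsum_expand.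
by apply: eq_big_seq => l /on_w /fgh ->.
Qed.

Lemma expsum_sub g h w :
  expsum (fun t => g t - h t) w = expsum g w - expsum h w.
Proof. by rewrite /expsum -sumrB; apply: eq_bigr => l _; rewrite mulrBr. Qed.

Lemma expsum_delta_out {N s w} : on_gens N w -> (N <= s)%N -> expsum (delta s) w = 0.
Proof.
move=> /allP on_w le_N_s; rewrite /expsum big_seq big1 // => l /on_w lt_l.
by rewrite /delta eqn_leq [(s <= _)%N]leqNgt (leq_trans lt_l le_N_s) andbF mulr0.
Qed.

Lemma abs_expsum_delta_le s w : (`|expsum (delta s) w| <= size w)%N.
Proof.
elim: w => [|l w IHw] /=; first by rewrite /expsum big_nil.
rewrite expsum_cons; have : (`|(sgn l * delta s l.1)%R| <= 1)%N.
  by rewrite /sgn /delta; case: (l.2); case: (l.1 == s).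
lia.
Qed.

Lemma expsum_asc s j : expsum (delta s) (asc_word j) = (s < j)%N%:Z.
Proof.
elim: j => [|j IHj]; first by rewrite /expsum big_nil.
by rewrite asc_wordS expsum_cat IHj expsum_gen /delta; lia.
Qed.

Lemma expsum_desc s j : expsum (delta s) (desc_word j) = (s < j)%N%:Z.
Proof. by rewrite expsum_rev expsum_asc. Qed.

End ExponentSum.

Section Growth.
Import Order.TTheory GRing.Theory Num.Theory.
Local Open Scope ring_scope.

Variables m k : nat.
Hypotheses (lt0k : (0 < k)%N) (le_k_m : (k <= m)%N).

Local Notation N := (m + k)%N.
Local Notation coord f s n := (expsum (delta s) (orbit f n N.-1)).

Lemma expsum_phi s t : (m.-1 <= s)%N -> (t < N)%N ->
  expsum (delta s) (phi m k t) = (s <= t)%N%:Z.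
Proof.
move=> le_s lt_t; have := tail_len_lt le_k_m lt_t.
by rewrite phiE // expsum_cat expsum_winv !expsum_asc; lia.
Qed.

Lemma expsum_asc_preim s j : (m.-1 <= s)%N -> (j <= N)%N ->
  expsum (delta s) (asc_preim m j) = (j == s.+1)%:Z.
Proof.
case: j => [|t] le_s lt_t; first by rewrite /expsum big_nil.
have := tail_len_lt le_k_m lt_t.
by rewrite asc_preimS expsum_cons expsum_desc /sgn /delta /=; lia.
Qed.

Lemma expsum_phi_inv s t : (m.-1 <= s)%N -> (t < N)%N ->
  expsum (delta s) (phi_inv m t) = (t == s)%:Z - (t == s.+1)%:Z.
Proof.
move=> le_s lt_t.
by rewrite expsum_cat expsum_winv !expsum_asc_preim // ?(ltnW lt_t); lia.
Qed.

Lemma coord0 f s : coord f s 0 = (N.-1 == s)%:Z.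
Proof. exact: expsum_gen. Qed.

Lemma on_gens_orbit_phi n : on_gens N (orbit (phi m k) n N.-1).
Proof. by apply: on_gens_orbit; [exact: on_gens_phi | lia]. Qed.

Lemma on_gens_orbit_phi_inv n : on_gens N (orbit (phi_inv m) n N.-1).
Proof. by apply: on_gens_orbit; [exact: on_gens_phi_inv | lia]. Qed.

Lemma coord_phiS s n : (m.-1 <= s)%N ->
  coord (phi m k) s n.+1 = coord (phi m k) s n + coord (phi m k) s.+1 n.+1.
Proof.
move=> le_s; rewrite -[LHS](subrK (coord (phi m k) s.+1 n.+1)); congr (_ + _).
rewrite -expsum_sub [orbit _ n.+1 _]/=.
apply: (expsum_subst_on (on_gens_orbit_phi n)) => t lt_t.
by rewrite expsum_sub !expsum_phi //; [rewrite /delta; lia | lia].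
Qed.

Lemma coord_phi_invS s n : (m.-1 <= s)%N ->
  coord (phi_inv m) s n.+1 = coord (phi_inv m) s n - coord (phi_inv m) s.+1 n.
Proof.
move=> le_s; rewrite -expsum_sub [orbit _ n.+1 _]/=.
apply: (expsum_subst_on (on_gens_orbit_phi_inv n)) => t lt_t.
by rewrite expsum_phi_inv.
Qed.

Lemma bin_le_coord_phi i n : (i <= k)%N -> 'C(n, i)%:Z <= coord (phi m k) (N.-1 - i) n.
Proof.
elim: n i => [|n IHn] i le_i_k; first by rewrite coord0 bin0n; lia.
elim: i le_i_k => [|i IHi] le_i_k.
  have := IHn 0%N le_i_k; rewrite !subn0 !bin0 coord_phiS; last by lia.
  by rewrite (expsum_delta_out (s := N.-1.+1) (on_gens_orbit_phi n.+1)) ?addr0 //; lia.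
rewrite coord_phiS; last by lia.
have -> : (N.-1 - i.+1).+1 = (N.-1 - i)%N by lia.
rewrite binS PoszD; apply: lerD; first exact: IHn.
by apply: le_trans (IHi (ltnW le_i_k)); rewrite lez_nat leq_bin2l.
Qed.

Lemma coord_phi_invE i n : (i <= k)%N ->
  coord (phi_inv m) (N.-1 - i) n = (-1) ^+ i * 'C(n, i)%:Z.
Proof.
elim: n i => [|n IHn] [|i] le_i_k.
- by rewrite coord0 subn0 eqxx.
- by rewrite coord0 bin0n mulr0; lia.
- have := IHn 0%N le_i_k; rewrite !subn0 !bin0 coord_phi_invS; last by lia.
  by rewrite (expsum_delta_out (s := N.-1.+1) (on_gens_orbit_phi_inv n)) ?subr0 //; lia.
rewrite coord_phi_invS; last by lia.
have -> : (N.-1 - i.+1).+1 = (N.-1 - i)%N by lia.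
rewrite !IHn ?(ltnW le_i_k) //.
by rewrite binS PoszD exprS; ring.
Qed.

Lemma bin_le_size_orbit_phi n : ('C(n, k) <= size (orbit (phi m k) n N.-1))%N.
Proof.
have := bin_le_coord_phi k n (leqnn k).
have := abs_expsum_delta_le (N.-1 - k) (orbit (phi m k) n N.-1); lia.
Qed.

Lemma bin_le_size_orbit_phi_inv n : ('C(n, k) <= size (orbit (phi_inv m) n N.-1))%N.
Proof.
have := abs_expsum_delta_le (N.-1 - k) (orbit (phi_inv m) n N.-1).
by rewrite coord_phi_invE // abszMsign.
Qed.

End Growth.

Lemma expn_le_ffact n j : 2 * j <= n -> n ^ j <= 2 ^ j * n ^_ j.
Proof.
elim: j => [|j IHj] le_2j_n; first by rewrite ffactn0.
rewrite expnS ffactnSr expnSr mulnC.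
apply: (@leq_trans (2 ^ j * n ^_ j * (2 * (n - j)))); last by apply: eq_leq; ring.
by apply: leq_mul; [apply: IHj | ]; lia.
Qed.

Lemma expn_le_bin n k : n ^ k <= 2 ^ k * k`! * 'C(n, k) + (2 * k) ^ k.
Proof.
case: (ltnP n (2 * k)) => [lt_n | le_2k_n].
  by rewrite (leq_trans _ (leq_addl _ _)) // leq_exp2r; lia.
by rewrite (leq_trans (expn_le_ffact _ _ le_2k_n)) // -bin_ffact [_ * k`!]mulnC mulnA leq_addr.
Qed.

Lemma leq_iter_len_gr N f n i : i < N -> iter_len f n i <= gr N f n.
Proof. by move=> lt_i; exact: (@leq_bigmax _ (iter_len f n \o val) (Ordinal lt_i)). Qed.

Lemma dominates_gr_pow {N f i k} : i < N ->
  (forall n, 'C(n, k) <= iter_len f n i) -> dominates (gr N f) (fun n => n ^ k).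
Proof.
move=> lt_i bin_le; exists (2 ^ k * k`!), ((2 * k) ^ k); split.
  by rewrite muln_gt0 expn_gt0 fact_gt0.
move=> n; rewrite (leq_trans (expn_le_bin n k)) // leq_add2r leq_mul2l.
by rewrite (leq_trans (bin_le n)) ?leq_iter_len_gr ?orbT.
Qed.

Theorem proposition8p12 (m k : nat) (hk1 : 1 <= k) (hkm : k <= m) :
  dominates (gr (m + k) (phi m k)) (fun n => n ^ k) /\
  exists psi : nat -> word,
    is_inverse (m + k) (phi m k) psi /\
    dominates (gr (m + k) psi) (fun n => n ^ k).
Proof.
have lt_top : (m + k).-1 < m + k by rewrite prednK // addn_gt0 hk1 orbT.
split; first exact: dominates_gr_pow lt_top (bin_le_size_orbit_phi _ _ hk1 hkm).
exists (phi_inv m); split.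
  split; first by move=> t; apply: on_gens_phi_inv.
  by split=> t lt_t; [apply: phi_inv_phi | apply: phi_phi_inv].
exact: dominates_gr_pow lt_top (bin_le_size_orbit_phi_inv _ _ hk1 hkm).
Qed.
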